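(* Let $(X,\|\cdot\|,\tau)$ be a complete, C-sequential Saks space with mixed topology $\gamma$, and let $(A,D(A))$ be the generator of a $\tau$-bi-continuous semigroup $(T(t))_{t\ge0}$ on $X$. Then the following are equivalent: (a) $(T(t))_{t\ge0}$ is $\gamma$-equicontinuous. (b) There is a directed system $\Gamma_\gamma$ of continuous seminorms generating $\gamma$ such that $(A,D(A))$ is $\Gamma_\gamma$-dissipative.
   Context: $(X,\|\cdot\|)$ is a Banach space and $\tau$ a Hausdorff locally convex topology on $X$ coarser than the norm topology. The mixed topology $\gamma=\gamma(\|\cdot\|,\tau)$ is the finest linear topology on $X$ coinciding with $\tau$ on $\|\cdot\|$-bounded sets with $\tau\subseteq\gamma\subseteq\tau_{\|\cdot\|}$ (Hausdorff locally convex). $(X,\|\cdot\|,\tau)$ is a Saks space if $\tau$ is generated by a directed system $\Gamma_\tau$ of continuous seminorms with $\|x\|=\sup_{p\in\Gamma_\tau}p(x)$ for all $x$; it is complete if $(X,\gamma)$ is complete, and C-sequential if every convex sequentially open subset of $(X,\gamma)$ is open. A $\tau$-bi-continuous semigroup is a family $(T(t))_{t\ge0}$ of bounded operators with $T(0)=\mathrm{id}$, $T(t+s)=T(t)T(s)$, $t\mapsto T(t)x$ $\tau$-continuous for each $x$, $\|T(t)\|\le Me^{\omega t}$ for some $M\ge1$, $\omega\in\mathbb{R}$, and such that for every $\|\cdot\|$-bounded sequence $x_n\to x$ in $\tau$ one has $T(t)(x_n-x)\to0$ in $\tau$ locally uniformly in $t\ge0$. Its generator: $D(A)=\{x:\tau\text{-}\lim_{t\to0+}\frac{T(t)x-x}{t}\text{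 exists and }\sup_{t\in(0,1]}\frac{\|T(t)x-x\|}{t}<\infty\}$, $Ax$ this limit. $(T(t))$ is $\gamma$-equicontinuous if, for a directed system $\Gamma$ of continuous seminorms generating $\gamma$, for every $p\in\Gamma$ there are $\tilde p\in\Gamma$, $C\ge0$ with $p(T(t)x)\le C\tilde p(x)$ for all $t\ge0$, $x\in X$. $A$ is $\Gamma_\gamma$-dissipative if $p((\lambda-A)x)\ge\lambda p(x)$ for all $\lambda>0$, $x\in D(A)$, $p\in\Gamma_\gamma$. *)

From HB Require Import structures.
From mathcomp Require Import all_boot all_order all_algebra.
From mathcomp Require Import all_classical all_reals all_analysis.
Set Implicit Arguments. Unset Strict Implicit. Unset Printing Implicit Defensive.
Import Order.TTheory GRing.Theory Num.Theory.
Import numFieldNormedType.Exports.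
Local Open Scope classical_set_scope.
Local Open Scope ring_scope.

Section SaksDefs.
Context {R : realType} {X : normedModType R}.

Definition seminorm (p : X -> R) : Prop :=
  (forall x y, p (x + y) <= p x + p y) /\ (forall (a : R) x, p (a *: x) = `|a| * p x).

Definition directed_sys (G : set (X -> R)) : Prop :=
  forall p1 p2, G p1 -> G p2 ->
    exists p, G p /\ exists C : R, 0 <= C /\
      forall x, Num.max (p1 x) (p2 x) <= C * p x.

Definition gen_open (G : set (X -> R)) (U : set X) : Prop :=
  forall x, U x -> exists (n : nat) (ps : 'I_n -> X -> R),
    (forall i, G (ps i)) /\ exists eps : R, 0 < eps /\
      forall y, (forall i, ps i (y - x) < eps) -> U y.

Definition generates (G : set (X -> R)) (O : set (set X)) : Prop :=
  (forall p, G p -> seminorm p) /\ directed_sys G /\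
  (forall U, O U <-> gen_open G U).

(* (X, |.|, tau) Saks space, tau generated by the directed system Gt and
   |x| = sup_{p in Gt} p x *)
Definition saks_space (Gt : set (X -> R)) : Prop :=
  (forall p, Gt p -> seminorm p) /\ directed_sys Gt /\
  (forall p x, Gt p -> p x <= `|x|) /\
  (forall x (eps : R), 0 < eps -> exists p, Gt p /\ `|x| - eps < p x).

Definition is_topology (O : set (set X)) : Prop :=
  O setT /\
  (forall F : set (set X), (forall U, F U -> O U) ->
     O [set x | exists U, F U /\ U x]) /\
  (forall U V, O U -> O V -> O (U `&` V)).

Definition linear_top (O : set (set X)) : Prop :=
  is_topology O /\
  (forall x y U, O U -> U (x + y) ->
     exists V W, O V /\ O W /\ V x /\ W y /\
       forall v w, V v -> W w -> U (v + w)) /\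
  (forall (a : R) x U, O U -> U (a *: x) ->
     exists (d : R) V, 0 < d /\ O V /\ V x /\
       forall (b : R) v, `|b - a| < d -> V v -> U (b *: v)).

Definition agrees_on_bounded (O : set (set X)) (Gt : set (X -> R)) : Prop :=
  forall B : set X, (exists r : R, forall x, B x -> `|x| <= r) ->
    forall U : set X,
      (exists V, O V /\ U = V `&` B) <-> (exists V, gen_open Gt V /\ U = V `&` B).

(* open sets of the mixed topology gamma(|.|, tau): the finest linear topology
   coinciding with tau on bounded sets; its open sets are exactly the sets that
   are open for some linear topology coinciding with tau on bounded sets *)
Definition mixed_open (Gt : set (X -> R)) (U : set X) : Prop :=
  exists O, linear_top O /\ agrees_on_bounded O Gt /\ O U.

Definition complete_top (O : set (set X)) : Prop :=
  forall (I : Type) (le : I -> I -> Prop) (i0 : I),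
    (forall i, le i i) -> (forall i j k, le i j -> le j k -> le i k) ->
    (forall i j, exists k, le i k /\ le j k) ->
    forall u : I -> X,
      (forall U, O U -> U 0 -> exists i1, forall i j, le i1 i -> le i1 j -> U (u i - u j)) ->
      exists x, forall U, O U -> U x -> exists i1, forall i, le i1 i -> U (u i).

Definition complete_saks (Gt : set (X -> R)) : Prop := complete_top (mixed_open Gt).

Definition seq_conv (O : set (set X)) (u : nat -> X) (x : X) : Prop :=
  forall U, O U -> U x -> exists N, forall n, (N <= n)%N -> U (u n).

Definition seq_open (O : set (set X)) (U : set X) : Prop :=
  forall u x, seq_conv O u x -> U x -> exists N, forall n, (N <= n)%N -> U (u n).

Definition convex_set (U : set X) : Prop :=
  forall x y (t : R), U x -> U y -> 0 <= t <= 1 -> U (t *: x + (1 - t) *: y).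

Definition C_sequential (Gt : set (X -> R)) : Prop :=
  forall U, convex_set U -> seq_open (mixed_open Gt) U -> mixed_open Gt U.

(* tau-bi-continuous semigroup (only t >= 0 matters) *)
Definition bicont_semigroup (Gt : set (X -> R)) (T : R -> {linear X -> X}) : Prop :=
  (forall x, T 0 x = x) /\
  (forall t s x, 0 <= t -> 0 <= s -> T (t + s) x = T t (T s x)) /\
  (forall x t0, 0 <= t0 -> forall U, gen_open Gt U -> U (T t0 x) ->
     exists d : R, 0 < d /\ forall t, 0 <= t -> `|t - t0| < d -> U (T t x)) /\
  (exists M w : R, 1 <= M /\
     forall t x, 0 <= t -> `|T t x| <= M * expR (w * t) * `|x|) /\
  (forall (u : nat -> X) x, (exists r : R, forall n, `|u n| <= r) ->
     seq_conv (gen_open Gt) u x ->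
     forall t0, 0 <= t0 -> forall U, gen_open Gt U -> U 0 ->
       exists N, forall n, (N <= n)%N -> forall t, 0 <= t <= t0 -> U (T t (u n - x))).

Definition gen_rel (Gt : set (X -> R)) (T : R -> {linear X -> X}) (x y : X) : Prop :=
  (forall U, gen_open Gt U -> U y ->
     exists d : R, 0 < d /\ forall t, 0 < t < d -> U (t^-1 *: (T t x - x))) /\
  (exists c : R, forall t, 0 < t <= 1 -> `|T t x - x| / t <= c).

Definition is_generator (Gt : set (X -> R)) (T : R -> {linear X -> X})
    (D : set X) (A : X -> X) : Prop :=
  (forall x, D x <-> exists y, gen_rel Gt T x y) /\
  (forall x, D x -> gen_rel Gt T x (A x)).

Definition equicont_wrt (G : set (X -> R)) (T : R -> {linear X -> X}) : Prop :=
  forall p, G p -> exists q, G q /\ exists C : R, 0 <= C /\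
    forall t x, 0 <= t -> p (T t x) <= C * q x.

Definition gamma_equicontinuous (Gt : set (X -> R)) (T : R -> {linear X -> X}) : Prop :=
  exists G, generates G (mixed_open Gt) /\ equicont_wrt G T.

Definition dissipative (G : set (X -> R)) (D : set X) (A : X -> X) : Prop :=
  forall p, G p -> forall (lam : R) x, 0 < lam -> D x ->
    lam * p x <= p (lam *: x - A x).

End SaksDefs.

From HB Require Import structures.
From mathcomp Require Import all_boot all_order all_algebra.
From mathcomp Require Import all_classical all_reals all_analysis.
From mathcomp Require Import lra.
Import Order.TTheory GRing.Theory Num.Theory.
Local Open Scope classical_set_scope.
Local Open Scope ring_scope.
Set Implicit Arguments. Unset Strict Implicit. Unset Printing Implicit Defensive.

(* (a) => (b): if the semigroup is equicontinuous for a generating family G,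
   then q_p y := sup_(t >= 0) p (T t y) satisfies p <= q_p <= C p' for some p' in
   G, so the q_p generate the mixed topology as well, and every T h is a
   q_p-contraction.  Hence lam q_p y <= q_p (lam y - (T h y - y) / h) for all
   h > 0, and the difference quotients, being bounded and tau-convergent to A y,
   converge to A y in the mixed topology.

   (b) => (a): for a dissipative p and x in D(A), dissipativity at T(s+h)x with
   lam = 1/h gives p (T (s+h) x) <= p (T s x) + h p (T s w_h), where
   w_h := (T h x - x) / h - T h (A x) is bounded and tau-null; by bi-continuity
   and the mixed topology the error term is uniformly small for s in [0, t], and
   summing over a grid of [0, t] gives p (T t x) <= p x.  This extends to all x
   because x is the tau-limit of the bounded sequence n * int_0^(1/n) T s x ds
   in D(A); the integral is the tau-limit of step-function integrals, which
   exists by completeness of the Saks space. *)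

Section SeminormTheory.
Context {R : realType} {X : normedModType R} (p : X -> R).
Hypothesis hp : seminorm p.

Lemma seminormD x y : p (x + y) <= p x + p y. Proof. exact: hp.1. Qed.

Lemma seminormZ a x : p (a *: x) = `|a| * p x. Proof. exact: hp.2. Qed.

Lemma seminorm0 : p 0 = 0.
Proof. by rewrite -(scale0r (0 : X)) seminormZ normr0 mul0r. Qed.

Lemma seminormN x : p (- x) = p x.
Proof. by rewrite -scaleN1r seminormZ normrN normr1 mul1r. Qed.

Lemma seminorm_ge0 x : 0 <= p x.
Proof. by have := seminormD x (- x); rewrite subrr seminorm0 seminormN; lra. Qed.

Lemma seminorm_distC x y : p (x - y) = p (y - x).
Proof. by rewrite -seminormN opprB. Qed.

Lemma seminorm_distD x y z : p (x - y) <= p (x - z) + p (z - y).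
Proof. by have := seminormD (x - z) (z - y); rewrite subrKA. Qed.

Lemma seminorm_le_distD x y : p x <= p y + p (x - y).
Proof. by have := seminormD (x - y) y; rewrite subrK addrC. Qed.

Lemma seminorm_sum n (f : 'I_n -> X) : p (\sum_(i < n) f i) <= \sum_(i < n) p (f i).
Proof.
apply: (big_ind2 (fun a b => p a <= b)) => //; first by rewrite seminorm0.
by move=> a b c d h1 h2; apply: le_trans (seminormD _ _) (lerD h1 h2).
Qed.

Lemma seminorm_weighted_sumB n (lam : 'I_n -> R) (v : 'I_n -> X) w e :
  (forall k, 0 <= lam k) -> (forall k, 0 < lam k -> p (v k - w) <= e) ->
  p (\sum_(k < n) lam k *: v k - (\sum_(k < n) lam k) *: w) <= (\sum_(k < n) lam k) * e.
Proof.
move=> lam_ge0 hv; rewrite scaler_suml -sumrB mulr_suml.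
apply: le_trans (seminorm_sum _) _; apply: ler_sum => k _.
rewrite -scalerBr seminormZ ger0_norm //.
have [->|lam_gt0] := eqVneq (lam k) 0; first by rewrite !mul0r.
by apply: ler_wpM2l => //; apply: hv; rewrite lt0r lam_gt0 lam_ge0.
Qed.

End SeminormTheory.

Lemma seminorm_normr {R : realType} {X : normedModType R} : seminorm (fun v : X => `|v|).
Proof. by split; [exact: ler_normD | exact: normrZ]. Qed.

Lemma normr_weighted_sum_le {R : realType} {X : normedModType R} n
    (lam : 'I_n -> R) (v : 'I_n -> X) B :
  (forall k, 0 <= lam k) -> (forall k, 0 < lam k -> `|v k| <= B) ->
  `|\sum_(k < n) lam k *: v k| <= (\sum_(k < n) lam k) * B.
Proof.
move=> lam_ge0 hv.
have := seminorm_weighted_sumB (@seminorm_normr R X) (v := v) (w := 0) (e := B) lam_ge0.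
by rewrite /= scaler0 subr0; apply => k /hv; rewrite subr0.
Qed.

Section RealFacts.
Context {R : realType}.

Lemma mulr_div_addr1_lt (c e : R) : 0 <= c -> 0 < e -> c * (e / (c + 1)) < e.
Proof.
move=> c0 e0; rewrite mulrA ltr_pdivrMr ?ltr_wpDl //.
by rewrite mulrDr mulr1 mulrC ltrDl.
Qed.

Lemma inv_succ_le1 n : n.+1%:R^-1 <= (1 : R).
Proof. by rewrite invr_le1 ?ler1n ?unitfE ?pnatr_eq0. Qed.

Lemma inv_succ_gt0 n : 0 < n.+1%:R^-1 :> R.
Proof. by rewrite invr_gt0 ltr0n. Qed.

Lemma inv_succ_lt (d : R) : 0 < d -> exists N, forall n, (N <= n)%N -> n.+1%:R^-1 < d.
Proof.
move=> d0; exists (Num.Def.archi_bound d^-1) => n hn.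
rewrite -[d]invrK ltf_pV2 ?posrE ?invr_gt0 ?ltr0n //.
apply: lt_le_trans (archi_boundP _) _; first by rewrite invr_ge0 ltW.
by rewrite ler_nat; exact: leq_trans hn (leqnSn n).
Qed.

Lemma ord_lbound_gt0 n (f : 'I_n -> R) : (forall i, 0 < f i) ->
  exists e, 0 < e /\ forall i, e <= f i.
Proof.
move=> f_gt0; pose S := \sum_(i < n) (f i)^-1.
have S_ge0 : 0 <= S by apply: sumr_ge0 => i _; rewrite invr_ge0 ltW.
exists (1 + S)^-1; split; first by rewrite invr_gt0 ltr_wpDr.
move=> i; rewrite -[f i]invrK lef_pV2 ?posrE ?invr_gt0 ?ltr_wpDr //.
rewrite /S (bigD1 i) //= addrCA ler_wpDr // ler_wpDl // sumr_ge0 // => j _.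
by rewrite invr_ge0 ltW.
Qed.

Lemma eventually_forall_ord n (P : 'I_n -> nat -> Prop) :
  (forall i, exists N, forall m, (N <= m)%N -> P i m) ->
  exists N, forall m, (N <= m)%N -> forall i, P i m.
Proof.
move=> /choice[N hN]; exists (\max_(i < n) N i)%N => m hm i.
exact/hN/(leq_trans (leq_bigmax i) hm).
Qed.

Lemma near0_forall_ord n (P : 'I_n -> R -> Prop) :
  (forall i, exists d, 0 < d /\ forall h, 0 < h < d -> P i h) ->
  exists d, 0 < d /\ forall h, 0 < h < d -> forall i, P i h.
Proof.
move=> /choice[d hd]; have [e [e0 hed]] := ord_lbound_gt0 (fun i => (hd i).1).
exists e; split => // h /andP[h0 he] i; apply: (hd i).2.
by rewrite h0 (lt_le_trans he (hed i)).
Qed.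

Lemma seq_criterion {A : Type} (Q : R -> A -> Prop) (P : A -> Prop) :
  (forall u : nat -> A, (forall n, Q n.+1%:R^-1 (u n)) -> exists N, P (u N)) ->
  exists d, 0 < d /\ forall a, Q d a -> P a.
Proof.
move=> hseq; apply: contrapT => no_delta.
have /choice[u hu] : forall n : nat, exists a, Q n.+1%:R^-1 a /\ ~ P a.
  move=> n; apply: contrapT => hn; apply: no_delta.
  exists n.+1%:R^-1; split; first exact: inv_succ_gt0.
  by move=> a hQ; apply: contrapT => hP; apply: hn; exists a.
by have [N] := hseq u (fun n => (hu n).1); apply: (hu N).2.
Qed.

End RealFacts.

Section SeminormConvergence.
Context {R : realType} {X : normedModType R}.

Definition seminorm_family (G : set (X -> R)) := forall p, G p -> seminorm p.

Definition sn_cvg (G : set (X -> R)) (u : nat -> X) x :=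
  forall p, G p -> forall e, 0 < e -> exists N, forall n, (N <= n)%N -> p (u n - x) < e.

Definition sn_cvg0r (G : set (X -> R)) (f : R -> X) z :=
  forall p, G p -> forall e, 0 < e ->
    exists d, 0 < d /\ forall h, 0 < h < d -> p (f h - z) < e.

Lemma sn_cvg0r_seq G f z t : sn_cvg0r G f z -> 0 < t ->
  sn_cvg G (fun n => f (t * n.+1%:R^-1)) z.
Proof.
move=> hf t0 p Gp e e0; have [d [d0 hd]] := hf p Gp e e0.
have [N hN] := inv_succ_lt (divr_gt0 d0 t0); exists N => n /hN.
rewrite ltr_pdivlMr // mulrC => nd.
by apply: hd; rewrite nd andbT mulr_gt0 // inv_succ_gt0.
Qed.

Lemma sn_cvg_seminorm_le G p (u v : nat -> X) a b : seminorm p -> G p ->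
  sn_cvg G u a -> sn_cvg G v b -> (forall n, p (u n) <= p (v n)) -> p a <= p b.
Proof.
move=> hp Gp ua vb uv; apply/ler_addgt0Pr => e e0; have e2 : 0 < e / 2 by rewrite divr_gt0.
have [N1 h1] := ua p Gp _ e2; have [N2 h2] := vb p Gp _ e2; pose n := maxn N1 N2.
have := h1 n (leq_maxl _ _); have := h2 n (leq_maxr _ _); have := uv n.
have := seminorm_le_distD hp a (u n); have := seminorm_le_distD hp (v n) b.
by rewrite (seminorm_distC hp a); lra.
Qed.

End SeminormConvergence.

Section SeminormTopology.
Context {R : realType} {X : normedModType R} (G : set (X -> R)).
Hypothesis hG : seminorm_family G.

Lemma gen_open_balls n (ps : 'I_n -> X -> R) x eps : (forall i, G (ps i)) ->
  gen_open G [set y | forall i, ps i (y - x) < eps].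
Proof.
move=> hps y /= hy.
have /ord_lbound_gt0[e [e0 he]] : forall i, 0 < eps - ps i (y - x).
  by move=> i; rewrite subr_gt0.
exists n, ps; split => //; exists e; split => // z hz i.
apply: le_lt_trans (seminorm_distD (hG (hps i)) _ _ y) _.
by have := he i; have := hz i; lra.
Qed.

Lemma gen_open_ball p x eps : G p -> gen_open G [set y | p (y - x) < eps].
Proof.
move=> Gp y /= hy; exists 1%N, (fun=> p); split => //.
exists (eps - p (y - x)); split; first by rewrite subr_gt0.
move=> z /(_ ord0) hz; apply: le_lt_trans (seminorm_distD (hG Gp) _ _ y) _; lra.
Qed.

Lemma seq_conv_gen_openE u x : seq_conv (gen_open G) u x <-> sn_cvg G u x.
Proof.
split=> [hu p Gp e e0 | hu U oU Ux].
  apply: (hu [set y | p (y - x) < e]); first exact: gen_open_ball.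
  by rewrite /= subrr seminorm0 //; exact: hG.
have [n [ps [hps [eps [eps0 hball]]]]] := oU x Ux.
have /eventually_forall_ord[N hN] :
    forall i, exists N, forall m, (N <= m)%N -> ps i (u m - x) < eps.
  by move=> i; apply: hu.
by exists N => m /hN hm; apply: hball.
Qed.

Lemma gen_open_cvg0rE f z :
  (forall U, gen_open G U -> U z -> exists d, 0 < d /\ forall t, 0 < t < d -> U (f t))
  <-> sn_cvg0r G f z.
Proof.
split=> [hf p Gp e e0 | hf U oU Uz].
  apply: (hf [set y | p (y - z) < e]); first exact: gen_open_ball.
  by rewrite /= subrr seminorm0 //; exact: hG.
have [n [ps [hps [eps [eps0 hball]]]]] := oU z Uz.
have /near0_forall_ord[d [d0 hd]] :
    forall i, exists d, 0 < d /\ forall t, 0 < t < d -> ps i (f t - z) < eps.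
  by move=> i; apply: hf.
by exists d; split => // t /hd ht; apply: hball.
Qed.

Lemma is_topology_gen_open : is_topology (gen_open G).
Proof.
split; [|split].
- move=> x _; exists 0%N, (fun _ _ => 0); split; first by case.
  by exists 1; split.
- move=> F oF x [U [FU Ux]]; have [n [ps [hps [eps [eps0 hball]]]]] := oF U FU x Ux.
  exists n, ps; split => //; exists eps; split => // y hy.
  by exists U; split => //; apply: hball.
- move=> U V oU oV x [Ux Vx].
  have [n [ps [hps [e1 [e10 hball1]]]]] := oU x Ux.
  have [m [qs [hqs [e2 [e20 hball2]]]]] := oV x Vx.
  exists (n + m)%N, (fun i => match fintype.split i with inl j => ps j | inr k => qs k end).
  split; first by move=> i; case: (fintype.split i).
  exists (Num.min e1 e2); split; first by rewrite lt_min e10 e20.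
  move=> y hy; split.
  + apply: hball1 => j; have := hy (lshift m j).
    by rewrite (unsplitK (inl j)) lt_min => /andP[].
  + apply: hball2 => j; have := hy (rshift n j).
    by rewrite (unsplitK (inr j)) lt_min => /andP[].
Qed.

Lemma gen_open_addr_cont x y U : gen_open G U -> U (x + y) ->
  exists V W, gen_open G V /\ gen_open G W /\ V x /\ W y /\
    forall v w, V v -> W w -> U (v + w).
Proof.
move=> oU Uxy; have [n [ps [hps [eps [eps0 hball]]]]] := oU _ Uxy.
exists [set v | forall i, ps i (v - x) < eps / 2], [set w | forall i, ps i (w - y) < eps / 2].
have center i : ps i 0 < eps / 2 by rewrite seminorm0 ?divr_gt0 //; exact: hG.
split; first exact: gen_open_balls.
split; first exact: gen_open_balls.
split; first by move=> i; rewrite /= subrr center.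
split; first by move=> i; rewrite /= subrr center.
move=> v w hv hw; apply: hball => i.
rewrite opprD addrACA; apply: le_lt_trans (seminormD (hG (hps i)) _ _) _.
by have := hv i; have := hw i; lra.
Qed.

Lemma gen_open_scaler_cont (a : R) x U : gen_open G U -> U (a *: x) ->
  exists (d : R) V, 0 < d /\ gen_open G V /\ V x /\
    forall (b : R) v, `|b - a| < d -> V v -> U (b *: v).
Proof.
move=> oU Uax; have [n [ps [hps [eps [eps0 hball]]]]] := oU _ Uax.
pose S := \sum_(i < n) ps i x.
have hS i : ps i x <= S.
  rewrite /S (bigD1 i) //= ler_wpDr // sumr_ge0 // => j _.
  exact/seminorm_ge0/hG.
have S_ge0 : 0 <= S by apply: sumr_ge0 => i _; exact/seminorm_ge0/hG.
pose d := eps / 2 / (S + 1).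
have d0 : 0 < d by rewrite !divr_gt0 // ltr_wpDl.
pose del := eps / 2 / (`|a| + d + 1).
have del0 : 0 < del by rewrite !divr_gt0 // ltr_wpDl // addr_ge0 // ltW.
exists d, [set v | forall i, ps i (v - x) < del]; split => //.
split; first exact: gen_open_balls.
split=> [i|b v hba hv]; first by rewrite /= subrr seminorm0 //; exact: hG.
apply: hball => i; have hp := hG (hps i).
have -> : b *: v - a *: x = b *: (v - x) + (b - a) *: x.
  by rewrite scalerBr scalerBl addrA subrK.
apply: le_lt_trans (seminormD hp _ _) _; rewrite !(seminormZ hp).
have hb : `|b| <= `|a| + d by have := ler_normD (b - a) a; rewrite subrK; lra.
have eps2 : 0 < eps / 2 by rewrite divr_gt0.
have term1 : `|b| * ps i (v - x) < eps / 2.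
  have ad0 : 0 <= `|a| + d by rewrite addr_ge0 // ltW.
  apply: le_lt_trans (mulr_div_addr1_lt ad0 eps2).
  by rewrite ler_pM //; [exact: seminorm_ge0 | exact: ltW].
have term2 : `|b - a| * ps i x < eps / 2.
  apply: le_lt_trans (mulr_div_addr1_lt S_ge0 eps2).
  by rewrite mulrC ler_pM //; [exact: seminorm_ge0 | exact: ltW].
lra.
Qed.

Lemma gen_open_dominated G' U :
  (forall q, G' q -> exists p C, G p /\ 0 <= C /\ forall y, q y <= C * p y) ->
  gen_open G' U -> gen_open G U.
Proof.
move=> dom oU x0 Ux0; have [n [qs [hqs [eps [eps0 hball]]]]] := oU x0 Ux0.
have /choice[pC hpC] : forall i, exists pC : (X -> R) * R,
    G pC.1 /\ 0 <= pC.2 /\ forall y, qs i y <= pC.2 * pC.1 y.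
  by move=> i; have [p [C hpC]] := dom _ (hqs i); exists (p, C).
have /ord_lbound_gt0[e [e0 he]] : forall i, 0 < eps / ((pC i).2 + 1).
  by move=> i; have [_ [C0 _]] := hpC i; rewrite divr_gt0 // ltr_wpDl.
exists n, (fun i => (pC i).1); split=> [i|]; first by case: (hpC i).
exists e; split => // y hy; apply: hball => i; have [_ [C0 hC]] := hpC i.
apply: le_lt_trans (hC _) (le_lt_trans _ (mulr_div_addr1_lt C0 eps0)).
by rewrite ler_wpM2l // ltW // (lt_le_trans (hy i) (he i)).
Qed.

Lemma linear_top_gen_open : linear_top (gen_open G).
Proof.
split; first exact: is_topology_gen_open.
by split; [exact: gen_open_addr_cont | exact: gen_open_scaler_cont].
Qed.

End SeminormTopology.

Section SaksSpace.
Context {R : realType} {X : normedModType R} (Gt : set (X -> R)).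
Hypothesis hS : saks_space Gt.

Lemma saks_seminorm_family : seminorm_family Gt. Proof. by case: hS. Qed.

Let hGt := saks_seminorm_family.

Lemma saks_seminorm_le p v : Gt p -> p v <= `|v|.
Proof. by case: hS => _ [_ [hle _]]; apply: hle. Qed.

Lemma saks_normr_le v c : (forall p, Gt p -> p v <= c) -> `|v| <= c.
Proof.
case: hS => _ [_ [_ hsup]] hc; rewrite leNgt; apply/negP => cv.
have := hsup v (`|v| - c); rewrite subr_gt0 => /(_ cv)[p [Gp]].
by have := hc p Gp; lra.
Qed.

Lemma saks_eq0 v : (forall p, Gt p -> forall e, 0 < e -> p v <= e) -> v = 0.
Proof.
move=> hv; apply/normr0_eq0/eqP; rewrite eq_le normr_ge0 andbT.
apply/ler_addgt0Pr => e e0; rewrite add0r; apply: saks_normr_le => p Gp; exact: hv.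
Qed.

Lemma sn_cvg_uniq (u : nat -> X) y z : sn_cvg Gt u y -> sn_cvg Gt u z -> y = z.
Proof.
move=> hy hz; apply/subr0_eq/saks_eq0 => p Gp e e0.
have e2 : 0 < e / 2 by rewrite divr_gt0.
have [N1 h1] := hy p Gp _ e2; have [N2 h2] := hz p Gp _ e2.
have := h1 _ (leq_maxl N1 N2); have := h2 _ (leq_maxr N1 N2).
have := seminorm_distD (hGt Gp) y z (u (maxn N1 N2)).
by rewrite (seminorm_distC (hGt Gp) y (u _)); lra.
Qed.

Lemma sn_cvgB (u v : nat -> X) y z : sn_cvg Gt u y -> sn_cvg Gt v z ->
  sn_cvg Gt (fun n => u n - v n) (y - z).
Proof.
move=> hu hv p Gp e e0; have e2 : 0 < e / 2 by rewrite divr_gt0.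
have [N1 h1] := hu p Gp _ e2; have [N2 h2] := hv p Gp _ e2.
exists (maxn N1 N2) => n; rewrite geq_max => /andP[n1 n2].
have -> : u n - v n - (y - z) = (u n - y) + - (v n - z) by rewrite !opprD !opprK addrACA.
apply: le_lt_trans (seminormD (hGt Gp) _ _) _.
by rewrite (seminormN (hGt Gp)); have := h1 n n1; have := h2 n n2; lra.
Qed.

Lemma sn_cvg_le p (u : nat -> X) y w a N0 : Gt p -> sn_cvg Gt u y ->
  (forall n, (N0 <= n)%N -> p (u n - w) <= a) -> p (y - w) <= a.
Proof.
move=> Gp hu hb; apply/ler_addgt0Pr => e e0; have [N hN] := hu p Gp e e0.
have := hN _ (leq_maxl N N0); have := hb _ (leq_maxr N N0).
have := seminorm_distD (hGt Gp) y w (u (maxn N N0)).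
by rewrite (seminorm_distC (hGt Gp) y (u _)); lra.
Qed.

Lemma mixed_open_gen_open U : gen_open Gt U -> mixed_open Gt U.
Proof.
by exists (gen_open Gt); split; [exact: linear_top_gen_open | split => // B _ V].
Qed.

End SaksSpace.

Lemma mixed_open0_local {R : realType} {X : normedModType R} (Gt : set (X -> R))
    U r : mixed_open Gt U -> U 0 ->
  exists n (ps : 'I_n -> X -> R), (forall i, Gt (ps i)) /\ exists eps, 0 < eps /\
    forall v, `|v| <= r -> (forall i, ps i v < eps) -> U v.
Proof.
move=> [Ot [_ [agree OU]]] U0.
pose B := [set v : X | `|v| <= r].
have [V [oV UBE]] : exists V, gen_open Gt V /\ U `&` B = V `&` B.
  by apply/(agree B _ (U `&` B)); [exists r | exists U].
have [r0|rlt0] := leP 0 r; last first.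
  exists 0%N, (fun _ _ => 0); split; first by case.
  by exists 1; split => // v hv; exfalso; have := normr_ge0 v; lra.
have V0 : V 0.
  have : (U `&` B) 0 by split; rewrite // /B /= normr0.
  by rewrite UBE; case.
have [n [ps [hps [eps [eps0 hball]]]]] := oV 0 V0.
exists n, ps; split => //; exists eps; split => // v hv hpv.
have : (V `&` B) v by split => //; apply: hball => i; rewrite subr0.
by rewrite -UBE; case.
Qed.

Section MixedGenerators.
Context {R : realType} {X : normedModType R} (Gt G : set (X -> R)).
Hypothesis hG : generates G (mixed_open Gt).

Lemma generates_local q eps r : G q -> 0 < eps ->
  exists n (ps : 'I_n -> X -> R), (forall i, Gt (ps i)) /\ exists e, 0 < e /\
    forall v, `|v| <= r -> (forall i, ps i v < e) -> q v < eps.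
Proof.
case: hG => hGs [_ hopen] Gq eps0.
have /hopen oU := gen_open_ball hGs (x := 0) (eps := eps) Gq.
have [|n [ps [hps [e [e0 hball]]]]] := mixed_open0_local r oU.
  by rewrite /= subrr seminorm0 //; exact: hGs.
exists n, ps; split => //; exists e; split => // v hv /(hball v hv).
by rewrite /= subr0.
Qed.

Lemma sn_cvg_bounded_generates (u : nat -> X) x r :
  (forall n, `|u n| <= r) -> sn_cvg Gt u x -> sn_cvg G u x.
Proof.
move=> ur hu q Gq e e0.
have [n [ps [hps [e' [e'0 hball]]]]] := generates_local (r + `|x|) Gq e0.
have /eventually_forall_ord[N hN] :
    forall i, exists N, forall m, (N <= m)%N -> ps i (u m - x) < e'.
  by move=> i; apply: hu.
exists N => m /hN hm; apply: hball => //.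
by apply: le_trans (ler_normB _ _) _; rewrite lerD2r.
Qed.

End MixedGenerators.

Lemma complete_saks_sn_cauchy {R : realType} {X : normedModType R} (Gt : set (X -> R))
    (u : nat -> X) r :
  saks_space Gt -> complete_saks Gt -> (forall n, `|u n| <= r) ->
  (forall p, Gt p -> forall e, 0 < e -> exists N, forall n m, (N <= n)%N -> (N <= m)%N ->
     p (u n - u m) < e) ->
  exists y, sn_cvg Gt u y.
Proof.
move=> hS hC ur cauchy.
have [U oU U0|y hy] := hC nat (fun a b => is_true (a <= b)%N) 0%N leqnn
  (fun i j k => @leq_trans j i k)
  (fun i j => ex_intro _ (maxn i j) (conj (leq_maxl i j) (leq_maxr i j))) u.
  have [n [ps [hps [eps [eps0 hball]]]]] := mixed_open0_local (r + r) oU U0.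
  have /eventually_forall_ord[N hN] : forall i, exists N, forall k, (N <= k)%N ->
      forall a b, (k <= a)%N -> (k <= b)%N -> ps i (u a - u b) < eps.
    move=> i; have [N hN] := cauchy _ (hps i) _ eps0.
    by exists N => k Nk a b ka kb; apply: hN; apply: leq_trans Nk _.
  exists N => a b Na Nb; apply: hball => [|i]; last exact: (hN N (leqnn N) i a b Na Nb).
  by apply: le_trans (ler_normB _ _) _; apply: lerD.
exists y => p Gp e e0.
have oB := mixed_open_gen_open hS (gen_open_ball (saks_seminorm_family hS) (x := y) (eps := e) Gp).
have [|N hN] := hy _ oB; last by exists N.
by rewrite /= subrr (seminorm0 (saks_seminorm_family hS Gp)).
Qed.

Section BiContinuousSemigroup.
Context {R : realType} {X : normedModType R}.
Variables (Gt : set (X -> R)) (T : R -> {linear X -> X}).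
Hypotheses (hS : saks_space Gt) (hT : bicont_semigroup Gt T).

Let hGt := saks_seminorm_family hS.

Lemma semigroup0 x : T 0 x = x. Proof. by case: hT. Qed.

Lemma semigroupD t s x : 0 <= t -> 0 <= s -> T (t + s) x = T t (T s x).
Proof. by case: hT => _ [hD _]; apply: hD. Qed.

Lemma semigroupC t s x : 0 <= t -> 0 <= s -> T t (T s x) = T s (T t x).
Proof. by move=> t0 s0; rewrite -!semigroupD // addrC. Qed.

Lemma semigroup_bound K :
  exists C, 0 <= C /\ forall t x, 0 <= t <= K -> `|T t x| <= C * `|x|.
Proof.
case: hT => _ [_ [_ [[M [w [M1 hMw]]] _]]].
exists (M * expR (`|w| * `|K|)); split; first by rewrite mulr_ge0 ?expR_ge0 //; lra.
move=> t x /andP[t0 tK]; apply: le_trans (hMw t x t0) _.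
rewrite ler_wpM2r //; apply: ler_wpM2l; first lra.
rewrite ler_expR; apply: le_trans (ler_norm _) _.
by rewrite normrM (ger0_norm t0); apply: ler_wpM2l => //; apply: le_trans tK (ler_norm _).
Qed.

Lemma semigroup_cvg0 x p e : Gt p -> 0 < e ->
  exists d, 0 < d /\ forall t, 0 <= t -> t < d -> p (T t x - x) < e.
Proof.
move=> Gp e0; case: hT => _ [_ [hcont _]].
have := hcont x 0 (lexx 0) _ (gen_open_ball hGt (x := x) (eps := e) Gp).
rewrite /= semigroup0 subrr (seminorm0 (hGt Gp)) => /(_ e0)[d [d0 hd]].
by exists d; split => // t t0 td; apply: hd; rewrite // subr0 ger0_norm.
Qed.

Lemma semigroup_bicont (u : nat -> X) x r t0 p e :
  (forall n, `|u n| <= r) -> sn_cvg Gt u x -> 0 <= t0 -> Gt p -> 0 < e ->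
  exists N, forall n, (N <= n)%N -> forall t, 0 <= t <= t0 -> p (T t (u n - x)) < e.
Proof.
move=> ur hu t00 Gp e0; case: hT => _ [_ [_ [_ hbi]]].
have := hbi u x (ex_intro _ r ur) ((seq_conv_gen_openE hGt _ _).2 hu) t0 t00 _
  (gen_open_ball hGt (x := 0) (eps := e) Gp).
rewrite /= subrr (seminorm0 (hGt Gp)) => /(_ e0)[N hN].
by exists N => n Nn t ht; have := hN n Nn t ht; rewrite subr0.
Qed.

Lemma semigroup_sn_cvg (u : nat -> X) x r t : (forall n, `|u n| <= r) ->
  sn_cvg Gt u x -> 0 <= t -> sn_cvg Gt (fun n => T t (u n)) (T t x).
Proof.
move=> ur hu t0 p Gp e e0; have [N hN] := semigroup_bicont ur hu t0 Gp e0.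
by exists N => n /hN /(_ t); rewrite t0 lexx linearB; apply.
Qed.

Lemma semigroup_sn_cvg0r (f : R -> X) z c s : (forall h, 0 < h <= 1 -> `|f h| <= c) ->
  sn_cvg0r Gt f z -> 0 <= s -> sn_cvg0r Gt (fun h => T s (f h)) (T s z).
Proof.
move=> fc hf s0 p Gp e e0.
suff [d [d0 hd]] : exists d, 0 < d /\ forall h, 0 < h < d -> p (T s (f h) - T s z) < e.
  by exists d.
apply: seq_criterion => u hu.
have u01 n : 0 < u n <= 1.
  by have /andP[u0 ult] := hu n; rewrite u0 (ltW (lt_le_trans ult (inv_succ_le1 n))).
have fu : sn_cvg Gt (fun n => f (u n)) z.
  move=> q Gq e' e'0; have [d [d0 hd]] := hf q Gq e' e'0.
  have [N hN] := inv_succ_lt d0; exists N => n Nn; apply: hd.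
  by have /andP[u0 ult] := hu n; rewrite u0 (lt_trans ult (hN n Nn)).
have [N hN] := semigroup_sn_cvg (fun n => fc _ (u01 n)) fu s0 Gp e0.
by exists N; apply: hN.
Qed.

(* A sequence of bad pairs (s_n, r_n) would contradict bi-continuity applied to
   the bounded tau-null sequence T(r_n)x - x. *)
Lemma orbit_uniform_cont_right x K p e : 0 <= K -> Gt p -> 0 < e ->
  exists eta, 0 < eta /\ forall s r, 0 <= s <= K -> 0 <= r < eta ->
    p (T (s + r) x - T s x) < e.
Proof.
move=> K0 Gp e0.
suff [eta [eta0 heta]] : exists d, 0 < d /\ forall sr : R * R,
    0 <= sr.1 <= K /\ 0 <= sr.2 < d -> p (T (sr.1 + sr.2) x - T sr.1 x) < e.
  by exists eta; split => // s r hs hr; apply: (heta (s, r)).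
apply: seq_criterion => u hu; have [C [C0 hC]] := semigroup_bound 1.
pose v n := T (u n).2 x - x.
have vb n : `|v n| <= C * `|x| + `|x|.
  apply: le_trans (ler_normB _ _) (lerD (hC _ _ _) (lexx _)).
  have [_ /andP[r0 rlt]] := hu n.
  by rewrite r0 (ltW (lt_le_trans rlt (inv_succ_le1 n))).
have v0 : sn_cvg Gt v 0.
  move=> q Gq e' e'0; have [d [d0 hd]] := semigroup_cvg0 x Gq e'0.
  have [N hN] := inv_succ_lt d0; exists N => n Nn; rewrite subr0.
  by have [_ /andP[r0 rlt]] := hu n; apply: hd (lt_trans rlt (hN n Nn)).
have [N hN] := semigroup_bicont vb v0 K0 Gp e0.
exists N; have [/andP[s0 sK] /andP[r0 _]] := hu N.
by have := hN N (leqnn N) _ (introT andP (conj s0 sK)); rewrite subr0 linearB -semigroupD.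
Qed.

Lemma orbit_uniform_cont x K p e : 0 <= K -> Gt p -> 0 < e ->
  exists eta, 0 < eta /\ forall s s', 0 <= s <= K -> 0 <= s' <= K -> `|s - s'| < eta ->
    p (T s x - T s' x) < e.
Proof.
move=> K0 Gp e0; have [eta [eta0 heta]] := orbit_uniform_cont_right x K0 Gp e0.
exists eta; split => // s s'.
wlog le_s's : s s' / s' <= s => [hwlog hs hs' hss|hs hs'].
  have [le|lt] := leP s' s; first exact: hwlog.
  by rewrite (seminorm_distC (hGt Gp)); apply: hwlog; rewrite 1?distrC // ltW.
rewrite ger0_norm ?subr_ge0 // => hss.
have := heta s' (s - s') hs'; rewrite [s' + _]addrC subrK; apply.
by rewrite subr_ge0 le_s's hss.
Qed.

End BiContinuousSemigroup.

Section Generator.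
Context {R : realType} {X : normedModType R}.
Variables (Gt : set (X -> R)) (T : R -> {linear X -> X}).
Hypothesis hS : saks_space Gt.

Let hGt := saks_seminorm_family hS.

Lemma gen_rel_cvg0r y z : gen_rel Gt T y z ->
  sn_cvg0r Gt (fun h => h^-1 *: (T h y - y)) z.
Proof. by case=> hlim _; apply/(gen_open_cvg0rE hGt). Qed.

Lemma gen_rel_bound y z : gen_rel Gt T y z ->
  exists c, forall h, 0 < h <= 1 -> `|h^-1 *: (T h y - y)| <= c.
Proof.
case=> _ [c hc]; exists c => h /[dup] /andP[h0 _] /hc.
by rewrite normrZ gtr0_norm ?invr_gt0 // mulrC.
Qed.

Lemma gen_rel_uniq y z1 z2 : gen_rel Gt T y z1 -> gen_rel Gt T y z2 -> z1 = z2.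
Proof.
move=> /gen_rel_cvg0r/sn_cvg0r_seq h1 /gen_rel_cvg0r/sn_cvg0r_seq h2.
exact: (sn_cvg_uniq hS (h1 _ ltr01) (h2 _ ltr01)).
Qed.

Lemma gen_relZ y z c : gen_rel Gt T y z -> gen_rel Gt T (c *: y) (c *: z).
Proof.
move=> hyz; have hlim := gen_rel_cvg0r hyz; case: hyz => _ [b hb].
have E h : T h (c *: y) - c *: y = c *: (T h y - y) by rewrite linearZZ scalerBr.
split.
  apply/(gen_open_cvg0rE hGt) => p Gp e e0.
  have e' : 0 < e / (`|c| + 1) by rewrite divr_gt0 // ltr_wpDl.
  have [d [d0 hd]] := hlim p Gp _ e'.
  exists d; split => // h /hd hh.
  rewrite E scalerA mulrC -scalerA -scalerBr (seminormZ (hGt Gp)).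
  apply: le_lt_trans (mulr_div_addr1_lt (normr_ge0 c) e0).
  by rewrite ler_wpM2l // ltW.
by exists (`|c| * b) => h /hb hh; rewrite E normrZ -mulrA ler_wpM2l.
Qed.

Variables (D : set X) (A : X -> X).
Hypotheses (hT : bicont_semigroup Gt T) (hGen : is_generator Gt T D A).

Lemma gen_rel_semigroup x s : D x -> 0 <= s -> gen_rel Gt T (T s x) (T s (A x)).
Proof.
move=> Dx s0; have hx := hGen.2 x Dx.
have E h : 0 <= h -> h^-1 *: (T h (T s x) - T s x) = T s (h^-1 *: (T h x - x)).
  by move=> h0; rewrite (semigroupC hT x h0 s0) linearZZ (raddfB (T s)).
have [c hc] := gen_rel_bound hx.
split.
  apply/(gen_open_cvg0rE hGt) => p Gp e e0.
  have [d [d0 hd]] := semigroup_sn_cvg0r hS hT hc (gen_rel_cvg0r hx) s0 Gp e0.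
  by exists d; split => // h /[dup] /andP[h0 _] /hd; rewrite E // ltW.
have [C [C0 hC]] := semigroup_bound hT s.
exists (C * c) => h /[dup] /andP[h0 _] h01.
have -> : `|T h (T s x) - T s x| / h = `|h^-1 *: (T h (T s x) - T s x)|.
  by rewrite normrZ gtr0_norm ?invr_gt0 // mulrC.
rewrite E; last exact: ltW.
apply: le_trans (hC _ _ _) _; first by rewrite s0 lexx.
by rewrite ler_wpM2l // hc.
Qed.

Lemma generator_semigroup x s : D x -> 0 <= s -> D (T s x) /\ A (T s x) = T s (A x).
Proof.
move=> Dx s0; have hTx := gen_rel_semigroup Dx s0.
have DTx : D (T s x) by apply/hGen.1; exists (T s (A x)).
by split => //; apply: gen_rel_uniq (hGen.2 _ DTx) hTx.
Qed.

End Generator.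

Section Overlap.
Context {R : realType}.

Definition overlap (a a' b c : R) := Num.max 0 (Num.min c a' - Num.max b a).

Ltac case_minmax := repeat match goal with
  | |- context [Num.max ?x ?y] => case: (leP x y)
  | |- context [Num.min ?x ?y] => case: (leP x y)
  end; intros; try lra.

Lemma overlap_ge0 a a' b c : 0 <= overlap a a' b c.
Proof. by rewrite /overlap le_max lexx. Qed.

Lemma overlap_id a a' b : overlap a a' b b = 0.
Proof. rewrite /overlap; case_minmax. Qed.

Lemma overlap_split a a' b c d : b <= c -> c <= d -> a <= a' ->
  overlap a a' b d = overlap a a' b c + overlap a a' c d.
Proof. rewrite /overlap; case_minmax. Qed.

Lemma overlap_gt0 a a' b c : 0 < overlap a a' b c -> a < c /\ b < a'.
Proof. rewrite /overlap; case_minmax; split; lra. Qed.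

Lemma overlap_sum_grid (d b c : R) M : 0 < d -> 0 <= b <= c ->
  \sum_(k < M) overlap (k%:R * d) (k.+1%:R * d) b c =
  Num.min c (M%:R * d) - Num.min b (M%:R * d).
Proof.
move=> d0 /andP[b0 bc]; elim: M => [|M IH]; first by rewrite big_ord0 mul0r; case_minmax.
rewrite big_ord_recr /= IH /overlap mulrSr mulrDl mul1r.
have : 0 <= M%:R * d by rewrite mulr_ge0 // ltW.
move: (M%:R * d) => m m0; case_minmax.
Qed.

End Overlap.

Section StepIntegral.
Context {R : realType} {X : normedModType R}.
Variables (Gt : set (X -> R)) (T : R -> {linear X -> X}) (x : X).
Hypotheses (hS : saks_space Gt) (hT : bicont_semigroup Gt T).

Let hGt := saks_seminorm_family hS.

Definition mesh n : R := n.+1%:R^-1.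

(* The integral over [0, c] of the orbit of x sampled on the grid of step
   [mesh n]; the grid covers [0, 2], enough for the shifts F (a + h) with
   a, h <= 1 used to compute the generator on F a. *)
Definition step_integral n c :=
  \sum_(k < n.+1 * 2) overlap (k%:R * mesh n) (k.+1%:R * mesh n) 0 c *: T (k%:R * mesh n) x.

Definition riemann_sum (P : nat) (b c : R) :=
  \sum_(i < P) ((c - b) / P%:R) *: T (b + i%:R * ((c - b) / P%:R)) x.

Lemma mesh_gt0 n : 0 < mesh n. Proof. exact: inv_succ_gt0. Qed.

Lemma grid_ge0 (k : nat) n : 0 <= k%:R * mesh n.
Proof. by rewrite mulr_ge0 // ltW // mesh_gt0. Qed.

Lemma gridS (k : nat) n : k.+1%:R * mesh n = k%:R * mesh n + mesh n.
Proof. by rewrite mulrSr mulrDl mul1r. Qed.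

Lemma overlap_grid_sum n b c : 0 <= b <= c -> c <= 2 ->
  \sum_(k < n.+1 * 2) overlap (k%:R * mesh n) (k.+1%:R * mesh n) b c = c - b.
Proof.
move=> /[dup] bc /andP[b0 le_bc] c2; rewrite overlap_sum_grid ?mesh_gt0 //.
have -> : (n.+1 * 2)%:R * mesh n = 2 by rewrite natrM mulrAC mulfV ?mul1r.
by rewrite !min_l // (le_trans le_bc c2).
Qed.

Lemma step_integral0 n : step_integral n 0 = 0.
Proof. by rewrite /step_integral big1 // => k _; rewrite overlap_id scale0r. Qed.

Lemma step_integralB n b c : 0 <= b <= c -> step_integral n c - step_integral n b =
  \sum_(k < n.+1 * 2) overlap (k%:R * mesh n) (k.+1%:R * mesh n) b c *: T (k%:R * mesh n) x.
Proof.
move=> /andP[b0 bc]; rewrite /step_integral -sumrB; apply: eq_bigr => k _.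
rewrite (@overlap_split _ _ _ 0 b c) //; last by rewrite gridS lerDl ltW // mesh_gt0.
by rewrite scalerDl [X in X - _]addrC addrK.
Qed.

Lemma step_integral_lipschitz : exists B, 0 <= B /\ forall n b c, 0 <= b <= c -> c <= 2 ->
  `|step_integral n c - step_integral n b| <= (c - b) * B.
Proof.
have [C [C0 hC]] := semigroup_bound hT 2.
exists (C * `|x|); split; first by rewrite mulr_ge0.
move=> n b c bc c2; rewrite step_integralB // -(overlap_grid_sum n bc c2).
apply: normr_weighted_sum_le => [k|k /overlap_gt0[lt_kc _]]; first exact: overlap_ge0.
by apply: hC; rewrite grid_ge0 ltW // (lt_le_trans lt_kc c2).
Qed.

Lemma step_integral_local p e : Gt p -> 0 < e -> exists eta, 0 < eta /\
  forall n, mesh n < eta -> forall b c, 0 <= b <= c -> c <= 2 -> c - b < eta ->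
  p (step_integral n c - step_integral n b - (c - b) *: T b x) <= (c - b) * e.
Proof.
move=> Gp e0; have [eta [eta0 heta]] := orbit_uniform_cont hS hT x (ler0n R 2) Gp e0.
exists eta; split => // n mesh_eta b c /[dup] bc /andP[b0 le_bc] c2 cb_eta.
rewrite step_integralB // -(overlap_grid_sum n bc c2).
apply: (seminorm_weighted_sumB (hGt Gp)) => [k|k /overlap_gt0[lt_kc lt_bk]].
  exact: overlap_ge0.
apply/ltW/heta; first by rewrite grid_ge0 ltW // (lt_le_trans lt_kc c2).
  by rewrite b0 (le_trans le_bc c2).
move: lt_bk; rewrite gridS; have := mesh_gt0 n.
have [le_bk|lt_kb] := leP b (k%:R * mesh n).
  by rewrite ger0_norm ?subr_ge0 //; lra.
by rewrite ltr0_norm ?subr_lt0 //; lra.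
Qed.

Lemma step_integral_riemann p e : Gt p -> 0 < e -> exists eta, 0 < eta /\
  forall n, mesh n < eta -> forall b c (P : nat), 0 <= b <= c -> c <= 2 -> (0 < P)%N ->
  (c - b) / P%:R < eta ->
  p (step_integral n c - step_integral n b - riemann_sum P b c) <= (c - b) * e.
Proof.
move=> Gp e0; have [eta [eta0 heta]] := step_integral_local Gp e0.
exists eta; split => // n mesh_eta b c P /andP[b0 bc] c2 P0.
have P_neq0 : P%:R != 0 :> R by rewrite pnatr_eq0 -lt0n.
set h := (c - b) / P%:R => h_eta.
have h0 : 0 <= h by rewrite divr_ge0 // subr_ge0.
pose t (i : nat) := b + i%:R * h.
have tP : t P = c by rewrite /t /h mulrC divfK // addrC subrK.
have tS i : t i.+1 = t i + h by rewrite /t mulrSr mulrDl mul1r addrA.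
have tle i : (i <= P)%N -> t i <= c by move=> iP; rewrite -tP lerD2l ler_wpM2r // ler_nat.
have tge i : b <= t i by rewrite lerDl mulr_ge0.
have cell i : (i < P)%N ->
    p (step_integral n (t i.+1) - step_integral n (t i) - h *: T (t i) x) <= h * e.
  move=> iP; have E : t i.+1 - t i = h by rewrite tS addrC addKr.
  have := heta n mesh_eta (t i) (t i.+1); rewrite E; apply => //.
    by rewrite (le_trans b0 (tge i)) tS lerDl.
  exact: le_trans (tle _ iP) c2.
have := telescope_sumr (fun i => step_integral n (t i)) (leq0n P).
rewrite tP /t mul0r addr0 -/(t _) big_mkord => <-.
rewrite /riemann_sum -/h -sumrB; apply: le_trans (seminorm_sum (hGt Gp) _) _.
apply: (@le_trans _ _ (\sum_(i < P) h * e)); first by apply: ler_sum => i _; apply: cell.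
by rewrite sumr_const card_ord -mulr_natr mulrAC /h divfK.
Qed.

Lemma step_integral_cauchy c : 0 <= c <= 2 -> forall p, Gt p -> forall e, 0 < e ->
  exists N, forall n m, (N <= n)%N -> (N <= m)%N ->
    p (step_integral n c - step_integral m c) < e.
Proof.
move=> /andP[c0 c2] p Gp e e0.
have e5 : 0 < e / 5 by rewrite divr_gt0.
have [eta [eta0 heta]] := step_integral_riemann Gp e5.
have [N hN] := inv_succ_lt eta0.
have [Q hQ] := inv_succ_lt (divr_gt0 eta0 (ltr0n R 2)).
have Q_eta : (c - 0) / Q.+1%:R < eta.
  have := hQ Q (leqnn Q); have := inv_succ_gt0 (R := R) Q.
  by rewrite subr0; move: (Q.+1%:R^-1) => q; nra.
have near_sum k : (N <= k)%N ->
    p (step_integral k c - riemann_sum Q.+1 0 c) <= c * (e / 5).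
  have c0' : 0 <= (0 : R) <= c by rewrite lexx c0.
  move=> Nk; have := heta k (hN k Nk) 0 c Q.+1 c0' c2 (ltn0Sn Q) Q_eta.
  by rewrite step_integral0 !subr0.
exists N => n m Nn Nm; have := seminorm_distD (hGt Gp) (step_integral n c)
  (step_integral m c) (riemann_sum Q.+1 0 c).
rewrite (seminorm_distC (hGt Gp) (riemann_sum _ _ _)).
have := near_sum n Nn; have := near_sum m Nm.
have : c * (e / 5) <= 2 * (e / 5) by rewrite ler_wpM2r // ltW.
lra.
Qed.

End StepIntegral.

Section OrbitIntegral.
Context {R : realType} {X : normedModType R}.
Variables (Gt : set (X -> R)) (T : R -> {linear X -> X}) (x : X).
Hypotheses (hS : saks_space Gt) (hT : bicont_semigroup Gt T) (hC : complete_saks Gt).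

Let hGt := saks_seminorm_family hS.

(* Only meaningful for 0 <= c <= 2, where the limit exists. *)
Definition orbit_integral c :=
  xget 0 [set y | sn_cvg Gt (fun n => step_integral T x n c) y].

Local Notation F := orbit_integral.

Lemma orbit_integral_cvg c : 0 <= c <= 2 ->
  sn_cvg Gt (fun n => step_integral T x n c) (F c).
Proof.
move=> /[dup] /andP[c0 c2] c02; apply: xgetPex.
have [B [B0 hB]] := step_integral_lipschitz x hT.
apply: (complete_saks_sn_cauchy (r := c * B)) hS hC _ (step_integral_cauchy x hS hT c02).
by move=> n; have := hB n 0 c; rewrite lexx c0 step_integral0 !subr0; apply.
Qed.

Lemma orbit_integralB_cvg b c : 0 <= b <= c -> c <= 2 ->
  sn_cvg Gt (fun n => step_integral T x n c - step_integral T x n b) (F c - F b).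
Proof.
move=> /andP[b0 bc] c2; apply: (sn_cvgB hS).
  by apply: orbit_integral_cvg; rewrite c2 (le_trans b0 bc).
by apply: orbit_integral_cvg; rewrite b0 (le_trans bc c2).
Qed.

Lemma orbit_integral0 : F 0 = 0.
Proof.
have h02 : 0 <= (0 : R) <= 2 by rewrite lexx ler0n.
apply: (sn_cvg_uniq hS (orbit_integral_cvg h02)) => p Gp e e0.
by exists 0%N => n _; rewrite step_integral0 subrr (seminorm0 (hGt Gp)).
Qed.

Lemma orbit_integral_lipschitz : exists B, 0 <= B /\ forall b c, 0 <= b <= c -> c <= 2 ->
  `|F c - F b| <= (c - b) * B.
Proof.
have [B [B0 hB]] := step_integral_lipschitz x hT.
exists B; split => // b c bc c2; apply: (saks_normr_le hS) => p Gp.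
rewrite -[F c - F b]subr0; apply: (sn_cvg_le hS (N0 := 0%N) Gp (orbit_integralB_cvg bc c2)).
by move=> n _; rewrite subr0; apply: le_trans (saks_seminorm_le hS _ Gp) (hB n b c bc c2).
Qed.

Lemma orbit_integral_local p e : Gt p -> 0 < e -> exists eta, 0 < eta /\
  forall b c, 0 <= b <= c -> c <= 2 -> c - b < eta ->
  p (F c - F b - (c - b) *: T b x) <= (c - b) * e.
Proof.
move=> Gp e0; have [eta [eta0 heta]] := step_integral_local x hS hT Gp e0.
have [N hN] := inv_succ_lt eta0.
exists eta; split => // b c bc c2 cb_eta.
apply: (sn_cvg_le hS (N0 := N) Gp (orbit_integralB_cvg bc c2)) => n Nn.
exact: heta n (hN n Nn) b c bc c2 cb_eta.
Qed.

Lemma orbit_integral_riemann b c : 0 <= b <= c -> c <= 2 ->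
  sn_cvg Gt (fun P => riemann_sum T x P.+1 b c) (F c - F b).
Proof.
move=> /[dup] bc /andP[b0 le_bc] c2 p Gp e e0.
have e3 : 0 < e / 3 by rewrite divr_gt0.
have [eta [eta0 heta]] := step_integral_riemann x hS hT Gp e3.
have [N hN] := inv_succ_lt eta0.
have [M hM] := inv_succ_lt (divr_gt0 eta0 (ltr0n R 2)).
exists M => P MP; rewrite (seminorm_distC (hGt Gp)).
have P_eta : (c - b) / P.+1%:R < eta.
  have := hM P MP; have := inv_succ_gt0 (R := R) P.
  by move: (P.+1%:R^-1) => q; nra.
have : p (F c - F b - riemann_sum T x P.+1 b c) <= (c - b) * (e / 3).
  apply: (sn_cvg_le hS (N0 := N) Gp (orbit_integralB_cvg bc c2)) => n Nn.
  exact: heta n (hN n Nn) b c P.+1 bc c2 (ltn0Sn P) P_eta.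
by nra.
Qed.

End OrbitIntegral.

Section GeneratorDomainDense.
Context {R : realType} {X : normedModType R}.
Variables (Gt : set (X -> R)) (T : R -> {linear X -> X}) (D : set X) (A : X -> X).
Hypotheses (hS : saks_space Gt) (hT : bicont_semigroup Gt T) (hC : complete_saks Gt).
Hypothesis hGen : is_generator Gt T D A.
Variable x : X.

Let hGt := saks_seminorm_family hS.
Local Notation F := (orbit_integral Gt T x).

Lemma riemann_sum_bounded b c : 0 <= b <= c -> c <= 2 ->
  exists r, forall P, `|riemann_sum T x P.+1 b c| <= r.
Proof.
move=> /andP[b0 bc] c2; have [C [C0 hC2]] := semigroup_bound hT 2.
exists ((c - b) * (C * `|x|)) => P; set h := (c - b) / P.+1%:R.
have h0 : 0 <= h by rewrite divr_ge0 // subr_ge0.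
have ih_le (i : nat) : (i <= P.+1)%N -> i%:R * h <= c - b.
  move=> iP; rewrite /h mulrCA -[leRHS]mulr1 ler_wpM2l ?subr_ge0 //.
  by rewrite ler_pdivrMr ?ltr0n // mul1r ler_nat.
have -> : c - b = \sum_(i < P.+1) h by rewrite sumr_const card_ord -mulr_natr /h divfK.
apply: normr_weighted_sum_le => // i _; apply: hC2; rewrite -/h.
have := ih_le i (ltnW (ltn_ord i)); have := mulr_ge0 (ler0n R i) h0.
by move=> ih0 ihle; rewrite addr_ge0 //=; lra.
Qed.

Lemma riemann_sum_shift P a h : 0 <= a -> 0 <= h ->
  T h (riemann_sum T x P 0 a) = riemann_sum T x P h (a + h).
Proof.
move=> a0 h0; rewrite /riemann_sum linear_sum; apply: eq_bigr => i _.
rewrite subr0 add0r addrK linearZZ -(semigroupD hT) //.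
by rewrite mulr_ge0 // divr_ge0.
Qed.

Lemma orbit_integral_shift a h : 0 <= a -> 0 <= h -> a + h <= 2 ->
  T h (F a) = F (a + h) - F h.
Proof.
move=> a0 h0 ah2; have a2 : a <= 2 by lra.
have a02 : 0 <= (0 : R) <= a by rewrite lexx a0.
have [r hr] := riemann_sum_bounded a02 a2.
have := orbit_integral_riemann x hS hT hC a02 a2.
rewrite (orbit_integral0 x hS hT hC) subr0 => /(semigroup_sn_cvg hS hT hr)/(_ h0) hTF.
apply: (sn_cvg_uniq hS hTF) => p Gp e e0.
have hah : 0 <= h <= a + h by rewrite h0 lerDr.
have [N hN] := orbit_integral_riemann x hS hT hC hah ah2 Gp e0.
by exists N => n Nn; rewrite riemann_sum_shift //; apply: hN.
Qed.

Lemma orbit_integral_gen_rel a : 0 < a <= 1 -> gen_rel Gt T (F a) (T a x - x).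
Proof.
move=> /andP[a0 a1]; have F0 := orbit_integral0 x hS hT hC.
have shift h : 0 < h -> h <= 1 -> T h (F a) - F a = F (a + h) - F a - (F h - F 0).
  move=> h0 h1; rewrite orbit_integral_shift; [|exact: ltW|exact: ltW|lra].
  by rewrite F0 subr0 addrAC.
have ah_a h : a + h - a = h by rewrite addrC addKr.
have dom h : 0 < h -> h <= 1 ->
    [/\ 0 <= a <= a + h, a + h <= 2, 0 <= (0 : R) <= h & h <= 2].
  move=> h0 h1; have a_ah : a <= a + h by lra.
  by split; rewrite ?lexx ?(ltW a0) ?(ltW h0) //=; lra.
have [B [B0 hB]] := orbit_integral_lipschitz x hS hT hC.
split.
  apply/(gen_open_cvg0rE hGt) => p Gp e e0; have hp := hGt Gp.
  have [eta [eta0 heta]] := orbit_integral_local x hS hT hC Gp (divr_gt0 e0 (ltr0n R 4)).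
  exists (Num.min eta 1); split => [|h /andP[h0]]; first by rewrite lt_min eta0 ltr01.
  rewrite lt_min => /andP[h_eta h1]; rewrite shift ?ltW //.
  have [aah ah2 h02 h2] := dom h h0 (ltW h1).
  have near_a : p (F (a + h) - F a - h *: T a x) <= h * (e / 4).
    by have := heta a (a + h) aah ah2; rewrite ah_a; apply.
  have near_0 : p (F h - F 0 - h *: T 0 x) <= h * (e / 4).
    by have := heta 0 h h02 h2; rewrite subr0; apply.
  have -> : h^-1 *: (F (a + h) - F a - (F h - F 0)) - (T a x - x) =
      h^-1 *: (F (a + h) - F a - h *: T a x) - h^-1 *: (F h - F 0 - h *: T 0 x).
    rewrite (semigroup0 hT) !scalerBr !scalerA mulVf ?gt_eqF // !scale1r.
    rewrite !opprB; set P := _ - h^-1 *: F a; set Q := _ - h^-1 *: F h.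
    by rewrite [x + Q]addrC [RHS]addrACA [- T a x + x]addrC.
  have hi : 0 <= h^-1 by rewrite invr_ge0 ltW.
  apply: le_lt_trans (seminormD hp _ _) _.
  rewrite (seminormN hp) !(seminormZ hp) (ger0_norm hi).
  have := ler_wpM2l hi near_a; have := ler_wpM2l hi near_0.
  by rewrite mulKf ?gt_eqF //; lra.
exists (2 * B) => h /andP[h0 h1]; rewrite ler_pdivrMr // shift //.
have [aah ah2 h02 h2] := dom h h0 h1.
have := hB a (a + h) aah ah2; have := hB 0 h h02 h2.
have := ler_normB (F (a + h) - F a) (F h - F 0).
by rewrite ah_a subr0; nra.
Qed.

Lemma generator_domain_dense : exists y : nat -> X,
  (forall n, D (y n)) /\ (exists r, forall n, `|y n| <= r) /\ sn_cvg Gt y x.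
Proof.
have F0 := orbit_integral0 x hS hT hC.
have [B [B0 hB]] := orbit_integral_lipschitz x hS hT hC.
have mesh01 n : 0 <= (0 : R) <= mesh n /\ mesh n <= 2 :> R.
  have := mesh_gt0 (R := R) n; have := inv_succ_le1 (R := R) n; rewrite -/(mesh n).
  by move=> m1 m0; rewrite lexx ltW //; split => //; lra.
have scale n : n.+1%:R * mesh n = 1 :> R by rewrite /mesh mulfV ?pnatr_eq0.
exists (fun n => n.+1%:R *: F (mesh n)); split; [|split].
- move=> n; apply/hGen.1; exists (n.+1%:R *: (T (mesh n) x - x)).
  apply/(gen_relZ hS)/orbit_integral_gen_rel.
  by rewrite mesh_gt0 inv_succ_le1.
- exists B => n; rewrite normrZ ger0_norm //.
  have [m0 m2] := mesh01 n; have := hB 0 (mesh n) m0 m2; rewrite F0 !subr0 => bound.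
  by apply: le_trans (ler_wpM2l (ler0n R n.+1) bound) _; rewrite mulrA scale mul1r.
- move=> p Gp e e0; have hp := hGt Gp.
  have [eta [eta0 heta]] := orbit_integral_local x hS hT hC Gp (divr_gt0 e0 (ltr0n R 2)).
  have [N hN] := inv_succ_lt eta0; exists N => n Nn; have [m0 m2] := mesh01 n.
  have -> : n.+1%:R *: F (mesh n) - x = n.+1%:R *: (F (mesh n) - mesh n *: x).
    by rewrite scalerBr scalerA scale scale1r.
  rewrite (seminormZ hp) ger0_norm //.
  have := heta 0 (mesh n) m0 m2; rewrite F0 (semigroup0 hT) !subr0 => /(_ (hN n Nn)) near.
  apply: le_lt_trans (ler_wpM2l (ler0n R n.+1) near) _.
  by rewrite mulrA scale mul1r ltr_pdivrMr //; lra.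
Qed.

End GeneratorDomainDense.

Section DissipativeContraction.
Context {R : realType} {X : normedModType R}.
Variables (Gt G : set (X -> R)) (T : R -> {linear X -> X}) (D : set X) (A : X -> X).
Hypotheses (hS : saks_space Gt) (hT : bicont_semigroup Gt T).
Hypotheses (hGen : is_generator Gt T D A) (hG : generates G (mixed_open Gt)).

Let hGt := saks_seminorm_family hS.

Definition generator_defect x h := h^-1 *: (T h x - x) - T h (A x).

Lemma generator_defect_cvg0r x : D x -> sn_cvg0r Gt (generator_defect x) 0.
Proof.
move=> Dx p Gp e e0; have e2 : 0 < e / 2 by rewrite divr_gt0.
have [d1 [d10 hd1]] := gen_rel_cvg0r hS (hGen.2 x Dx) Gp e2.
have [d2 [d20 hd2]] := semigroup_cvg0 hS hT (A x) Gp e2.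
exists (Num.min d1 d2); split => [|h /andP[h0]]; first by rewrite lt_min d10 d20.
rewrite lt_min => /andP[hd1' hd2']; rewrite subr0 /generator_defect -(subrKA (A x)).
apply: le_lt_trans (seminormD (hGt Gp) _ _) _.
rewrite (seminorm_distC (hGt Gp) (A x)).
by have := hd1 h (introT andP (conj h0 hd1')); have := hd2 h (ltW h0) hd2'; lra.
Qed.

Lemma generator_defect_bounded x t : D x ->
  exists r, forall h, 0 < h <= t -> `|generator_defect x h| <= r.
Proof.
move=> Dx; have [c hc] := gen_rel_bound (hGen.2 x Dx).
have [C [C0 hC]] := semigroup_bound hT t.
exists (`|c| + (C + 1) * `|x| + C * `|A x|) => h /andP[h0 ht].
have Th_le v : `|T h v| <= C * `|v| by apply: hC; rewrite ltW.
apply: le_trans (ler_normB _ _) _; apply: lerD (Th_le _).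
have [h1|h1] := leP h 1.
  by apply: le_trans (hc h _) _; rewrite ?h0 // ler_wpDr ?mulr_ge0 ?addr_ge0 // ler_norm.
rewrite normrZ gtr0_norm ?invr_gt0 //.
apply: le_trans (_ : 1 * `|T h x - x| <= _).
  by rewrite ler_wpM2r // ltW // invf_lt1.
rewrite mul1r ler_wpDl // mulrDl mul1r.
by apply: le_trans (ler_normB _ _) _; rewrite lerD2r.
Qed.

Lemma semigroup_bicont_generates (w : nat -> X) r t p eps :
  (forall n, `|w n| <= r) -> sn_cvg Gt w 0 -> 0 <= t -> G p -> 0 < eps ->
  exists N, forall s, 0 <= s <= t -> p (T s (w N)) < eps.
Proof.
move=> wr w0 t0 Gp eps0; have [C [C0 hC]] := semigroup_bound hT t.
have [n [ps [hps [e [e0 hball]]]]] := generates_local hG (C * r) Gp eps0.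
have /eventually_forall_ord[N hN] : forall i, exists N, forall m, (N <= m)%N ->
    forall s, 0 <= s <= t -> ps i (T s (w m - 0)) < e.
  by move=> i; exact: (semigroup_bicont hS hT wr w0 t0 (hps i) e0).
exists N => s st; apply: hball => [|i]; last by have := hN N (leqnn N) i s st; rewrite subr0.
by apply: le_trans (hC s _ st) _; rewrite ler_wpM2l.
Qed.

Lemma dissipative_step p x s h : dissipative G D A -> G p -> D x -> 0 <= s -> 0 < h ->
  p (T (s + h) x) <= p (T s x) + h * p (T s (generator_defect x h)).
Proof.
move=> hdis Gp Dx s0 h0; have hp := hG.1 p Gp; have hi : 0 < h^-1 by rewrite invr_gt0.
have [Dy Ay] := generator_semigroup hS hT hGen Dx (addr_ge0 s0 (ltW h0)).
have := hdis p Gp h^-1 _ hi Dy; rewrite Ay.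
have -> : h^-1 *: T (s + h) x - T (s + h) (A x) = h^-1 *: T s x + T s (generator_defect x h).
  rewrite /generator_defect !(semigroupD hT _ s0 (ltW h0)) linearB linearZ /= linearB.
  by rewrite scalerBr addrA [h^-1 *: T s x + _]addrC subrK.
move=> /le_trans/(_ (seminormD hp _ _)); rewrite (seminormZ hp) gtr0_norm //.
by move=> /(ler_wpM2l (ltW h0)); rewrite mulrDr !mulVKf ?gt_eqF.
Qed.

Lemma dissipative_contraction p x t : dissipative G D A -> G p -> D x -> 0 <= t ->
  p (T t x) <= p x.
Proof.
move=> hdis Gp Dx t0; have [->|t_neq0] := eqVneq t 0; first by rewrite (semigroup0 hT).
have t_gt0 : 0 < t by rewrite lt0r t_neq0.
apply/ler_addgt0Pr => e e0; have eps0 : 0 < e / t by rewrite divr_gt0.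
have h_pos N : 0 < t * N.+1%:R^-1 by rewrite mulr_gt0 ?inv_succ_gt0.
have h_le N : t * N.+1%:R^-1 <= t by apply: ler_piMr; [exact: ltW | exact: inv_succ_le1].
have [r hr] := generator_defect_bounded t Dx.
have wr N : `|generator_defect x (t * N.+1%:R^-1)| <= r by rewrite hr ?h_pos ?h_le.
have [N small] := semigroup_bicont_generates wr
  (sn_cvg0r_seq (generator_defect_cvg0r Dx) t_gt0) t0 Gp eps0.
set h := t * N.+1%:R^-1 in small.
have Nh : N.+1%:R * h = t by rewrite /h mulrCA mulfV ?mulr1 ?pnatr_eq0.
suff step k : (k <= N.+1)%N -> p (T (k%:R * h) x) <= p x + k%:R * h * (e / t).
  by have := step _ (leqnn _); rewrite Nh mulrC divfK.
elim: k => [|k IH] kN; first by rewrite mulr0n !mul0r (semigroup0 hT) addr0.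
have kh0 : 0 <= k%:R * h by rewrite mulr_ge0 // (ltW (h_pos N)).
have kht : k%:R * h <= t.
  by rewrite -Nh; apply: ler_wpM2r; [exact: ltW (h_pos N) | rewrite ler_nat ltnW].
rewrite mulrSr mulrDl mul1r; apply: le_trans (dissipative_step hdis Gp Dx kh0 (h_pos N)) _.
have := ltW (small _ (introT andP (conj kh0 kht))) => /(ler_wpM2l (ltW (h_pos N))).
by have := IH (ltnW kN); rewrite -/h; lra.
Qed.

End DissipativeContraction.

Definition orbit_sup {R : realType} {X : normedModType R} (T : R -> {linear X -> X})
    (p : X -> R) (y : X) : R :=
  sup [set r | exists t, 0 <= t /\ r = p (T t y)].

Section OrbitSup.
Context {R : realType} {X : normedModType R}.
Variables (Gt : set (X -> R)) (T : R -> {linear X -> X}) (p pt : X -> R) (C : R).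
Hypotheses (hT : bicont_semigroup Gt T) (hp : seminorm p).
Hypothesis p_dom : forall t y, 0 <= t -> p (T t y) <= C * pt y.

Local Notation q := (orbit_sup T p).

Lemma orbit_sup_le y M : (forall t, 0 <= t -> p (T t y) <= M) -> q y <= M.
Proof.
move=> hM; apply: ge_sup => [|_ [t [t0 ->]]]; last exact: hM.
by exists (p (T 0 y)), 0.
Qed.

Lemma orbit_sup_ub y t : 0 <= t -> p (T t y) <= q y.
Proof.
move=> t0; apply: sup_upper_bound; last by exists t.
split; first by exists (p (T 0 y)), 0.
by exists (C * pt y) => _ [s [s0 ->]]; exact: p_dom.
Qed.

Lemma orbit_sup_dominated y : q y <= C * pt y.
Proof. by apply: orbit_sup_le => t; exact: p_dom. Qed.

Lemma orbit_sup_ge y : p y <= q y.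
Proof. by have := orbit_sup_ub y (lexx 0); rewrite (semigroup0 hT). Qed.

Lemma orbit_sup_semigroup y h : 0 <= h -> q (T h y) <= q y.
Proof.
move=> h0; apply: orbit_sup_le => t t0; rewrite -(semigroupD hT y t0 h0).
by apply: orbit_sup_ub; rewrite addr_ge0.
Qed.

Lemma orbit_sup_seminorm : seminorm q.
Proof.
have qZ a y : q (a *: y) <= `|a| * q y.
  apply: orbit_sup_le => t t0; rewrite linearZ (seminormZ hp).
  by rewrite ler_wpM2l // orbit_sup_ub.
split=> [y z | a y].
  apply: orbit_sup_le => t t0; rewrite linearD.
  by apply: le_trans (seminormD hp _ _) (lerD _ _); apply: orbit_sup_ub.
apply/eqP; rewrite eq_le qZ /=.
have [->|a0] := eqVneq a 0.
  by rewrite normr0 mul0r (le_trans (seminorm_ge0 hp _) (orbit_sup_ge _)).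
have := ler_wpM2l (normr_ge0 a) (qZ a^-1 (a *: y)).
by rewrite scalerA mulVf // scale1r mulrA normrV ?unitfE // mulfV ?normr_eq0 // mul1r.
Qed.

End OrbitSup.

Lemma contraction_dissipative_step {R : realType} {X : normedModType R}
    (T : R -> {linear X -> X}) (q : X -> R) y h lam :
  seminorm q -> 0 < h -> 0 <= lam -> q (T h y) <= q y ->
  lam * q y <= q (lam *: y - h^-1 *: (T h y - y)).
Proof.
move=> hq h0 lam0 qT; have hi : 0 <= h^-1 by rewrite invr_ge0 ltW.
have E : (lam + h^-1) *: y = (lam *: y - h^-1 *: (T h y - y)) + h^-1 *: T h y.
  by rewrite scalerDl scalerBr opprB -addrA subrK.
have := seminormD hq (lam *: y - h^-1 *: (T h y - y)) (h^-1 *: T h y).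
rewrite -E !(seminormZ hq) (ger0_norm hi) ger0_norm ?addr_ge0 //.
by have := ler_wpM2l hi qT; lra.
Qed.

Section EquicontinuousDissipative.
Context {R : realType} {X : normedModType R}.
Variables (Gt G : set (X -> R)) (T : R -> {linear X -> X}) (D : set X) (A : X -> X).
Hypotheses (hS : saks_space Gt) (hT : bicont_semigroup Gt T).
Hypotheses (hGen : is_generator Gt T D A) (hG : generates G (mixed_open Gt)).
Hypothesis heq : equicont_wrt G T.

Let hGs := hG.1.

Definition orbit_sup_family := [set q | exists p, G p /\ q = orbit_sup T p].

Lemma orbit_sup_family_generates : generates orbit_sup_family (mixed_open Gt).
Proof.
have [_ [hGd hGo]] := hG; split; [|split].
- move=> _ [p [Gp ->]]; have [pt [_ [C [_ hC]]]] := heq Gp.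
  exact: orbit_sup_seminorm hT (hGs Gp) hC.
- move=> _ _ [p1 [Gp1 ->]] [p2 [Gp2 ->]]; have [p [Gp [C [C0 hC]]]] := hGd _ _ Gp1 Gp2.
  exists (orbit_sup T p); split; first by exists p.
  have [pt [_ [C' [_ hC']]]] := heq Gp.
  exists C; split => // z; rewrite ge_max; apply/andP; split; apply: orbit_sup_le => t t0;
    apply: le_trans (le_trans _ (hC _)) (ler_wpM2l C0 (orbit_sup_ub hC' _ t0));
    by rewrite le_max lexx ?orbT.
move=> U; rewrite hGo; split; apply: gen_open_dominated.
  move=> p Gp; have [pt [_ [C [_ hC]]]] := heq Gp.
  exists (orbit_sup T p), 1; split; first by exists p.
  by split => // y; rewrite mul1r (orbit_sup_ge hT hC).
move=> _ [p [Gp ->]]; have [pt [Gpt [C [C0 hC]]]] := heq Gp.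
by exists pt, C; split => //; split => // y; apply: orbit_sup_dominated.
Qed.

Lemma orbit_sup_family_dissipative : dissipative orbit_sup_family D A.
Proof.
move=> _ [p [Gp ->]] lam y lam0 Dy.
have [pt [Gpt [C [C0 hC]]]] := heq Gp; have hq := orbit_sup_seminorm hT (hGs Gp) hC.
have hy := hGen.2 y Dy; have [c hc] := gen_rel_bound hy.
have h01 n : 0 < (1 * n.+1%:R^-1 : R) <= 1 by rewrite mul1r inv_succ_gt0 inv_succ_le1.
have v_cvg := sn_cvg0r_seq (gen_rel_cvg0r hS hy) (@ltr01 R).
have {v_cvg}v_cvg := sn_cvg_bounded_generates hG (fun n => hc _ (h01 n)) v_cvg.
apply/ler_addgt0Pr => e e0.
have [N /= hN] := v_cvg pt Gpt _ (divr_gt0 e0 (ltr_wpDl C0 ltr01)).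
have [hN0 _] := andP (h01 N).
apply: le_trans (contraction_dissipative_step hq hN0 (ltW lam0)
  (orbit_sup_semigroup hT hC y (ltW hN0))) _.
apply: le_trans (seminorm_distD hq _ _ (A y)) _; rewrite lerD2l (seminorm_distC hq).
apply: le_trans (orbit_sup_dominated hC _) (ltW (le_lt_trans _ (mulr_div_addr1_lt C0 e0))).
by rewrite ler_wpM2l // ltW // hN.
Qed.

End EquicontinuousDissipative.

Section DissipativeEquicontinuous.
Context {R : realType} {X : normedModType R}.
Variables (Gt G : set (X -> R)) (T : R -> {linear X -> X}) (D : set X) (A : X -> X).
Hypotheses (hS : saks_space Gt) (hT : bicont_semigroup Gt T) (hC : complete_saks Gt).
Hypotheses (hGen : is_generator Gt T D A) (hG : generates G (mixed_open Gt)).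

Lemma dissipative_equicontinuous : dissipative G D A -> equicont_wrt G T.
Proof.
move=> hdis p Gp; exists p; split => //; exists 1; split => // t x t0; rewrite mul1r.
have [y [Dy [[r yr] yx]]] := generator_domain_dense hS hT hC hGen x.
have [Ct [Ct0 hCt]] := semigroup_bound hT t.
have Tyr n : `|T t (y n)| <= Ct * r.
  by apply: le_trans (hCt _ _ _) (ler_wpM2l Ct0 (yr n)); rewrite t0 lexx.
apply: (sn_cvg_seminorm_le (hG.1 _ Gp) Gp (u := fun n => T t (y n)) (v := y)).
- exact: (sn_cvg_bounded_generates hG Tyr (semigroup_sn_cvg hS hT yr yx t0)).
- exact: (sn_cvg_bounded_generates hG yr yx).
- by move=> n; exact: (dissipative_contraction hS hT hGen hG hdis Gp (Dy n) t0).
Qed.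

End DissipativeEquicontinuous.

Theorem proposition3p23 (R : realType) (X : completeNormedModType R)
  (Gt : set (X -> R)) (T : R -> {linear X -> X}) (D : set X) (A : X -> X) :
  saks_space Gt -> complete_saks Gt -> C_sequential Gt ->
  bicont_semigroup Gt T -> is_generator Gt T D A ->
  (gamma_equicontinuous Gt T <->
   exists G : set (X -> R), generates G (mixed_open Gt) /\ dissipative G D A).
Proof.
move=> hS hC _ hT hGen; split.
  case=> G [hG heq]; exists (orbit_sup_family G T); split.
    exact: orbit_sup_family_generates hT hG heq.
  exact: orbit_sup_family_dissipative hS hT hGen hG heq.
case=> G [hG hdis]; exists G; split => //.
exact: dissipative_equicontinuous hS hT hC hGen hG hdis.
Qed.
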